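(* Let $\mathcal{P}=(\{\mathcal{E}_k:k\in K\},\{M_0,M_1\})$ be a concurrent quantum program on a Hilbert space $\mathcal{H}$ of finite dimension $d$, and let $\rho_0$ be an initial density operator. Then $$\mathcal{H}_{URR}=\operatorname{supp}\Big(\sum_{i=d}^{2d-1}\mathcal{F}^i(\rho_0)\Big),\qquad \mathcal{F}=\sum_{k\in K}\mathcal{F}_k.$$
   Context: $\mathcal{H}$ is a complex Hilbert space of finite dimension $d\ge 1$. A super-operator on $\mathcal{H}$ is a completely positive linear map on operators on $\mathcal{H}$ that does not increase trace of positive operators; trace-preserving if it preserves trace. $\operatorname{supp}(\rho)$ for positive semidefinite $\rho$ is the span of eigenvectors with nonzero eigenvalues. A concurrent quantum program is a pair $\mathcal{P}=(\{\mathcal{E}_k:k\in K\},\{M_0,M_1\})$ with $K=\{1,\dots,m\}$, each $\mathcal{E}_k$ a trace-preserving super-operator on $\mathcal{H}$, and $M_0^\dagger M_0+M_1^\dagger M_1=I$. Define $\mathcal{F}_k(\rho)=\mathcal{E}_k(M_1\rho M_1^\dagger)$; for a finite string $f=s_1\cdots s_n$ over $K$ (length $|f|=n$), $\mathcal{F}_f=\mathcal{F}_{s_n}\circ\cdots\circ\mathcal{F}_{s_1}$. $\mathcal{F}^i$ is the $i$-fold composition. The uniformly repeatedly reachable space is $\mathcal{H}_{URR}=\bigcap_{n\ge0}\bigvee\{\operatorname{supp}\mathcal{F}_f(\rho_0): f\in K^*,\ |f|\ge n\}$, where $\bigvee$ is the span of the union of subspaces. *)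

(* The Hilbert space H of dimension d is C^d, vectors are
   column vectors 'cV[C]_d, operators are 'M[C]_d, where C is an arbitrary
   numClosedFieldType (algebraically closed field with conjugation and the
   induced partial order; the complex numbers are such a field). *)
From HB Require Import structures.
From mathcomp Require Import all_boot all_order all_algebra.
Set Implicit Arguments. Unset Strict Implicit. Unset Printing Implicit Defensive.
Import Order.TTheory GRing.Theory Num.Theory.
Local Open Scope ring_scope.

Section QDefs.
Variable C : numClosedFieldType.

Definition adj (m n : nat) (A : 'M[C]_(m, n)) : 'M[C]_(n, m) :=
  (map_mx Num.conj A)^T.

Definition psd (d : nat) (A : 'M[C]_d) : Prop :=
  forall u : 'cV[C]_d, 0 <= (adj u *m A *m u) 0 0.

Definition density (d : nat) (rho : 'M[C]_d) : Prop :=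
  psd rho /\ \tr rho = 1.

(* positivity of an n x n block operator on C^n (x) C^d, given by its blocks *)
Definition block_psd (d n : nat) (B : 'I_n -> 'I_n -> 'M[C]_d) : Prop :=
  forall v : 'I_n -> 'cV[C]_d,
    0 <= \sum_(i < n) \sum_(j < n) (adj (v i) *m B i j *m v j) 0 0.

Definition linear_map (d : nat) (E : 'M[C]_d -> 'M[C]_d) : Prop :=
  forall (a : C) (A B : 'M[C]_d), E (a *: A + B) = a *: E A + E B.

(* complete positivity: id_n (x) E is positive for every n *)
Definition completely_positive (d : nat) (E : 'M[C]_d -> 'M[C]_d) : Prop :=
  forall (n : nat) (B : 'I_n -> 'I_n -> 'M[C]_d),
    block_psd B -> block_psd (fun i j => E (B i j)).

Definition superop (d : nat) (E : 'M[C]_d -> 'M[C]_d) : Prop :=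
  [/\ linear_map E, completely_positive E &
      forall A : 'M[C]_d, psd A -> \tr (E A) <= \tr A].

Definition trace_preserving (d : nat) (E : 'M[C]_d -> 'M[C]_d) : Prop :=
  forall A : 'M[C]_d, psd A -> \tr (E A) = \tr A.

Definition vsum (d : nat) (s : seq 'cV[C]_d) : 'cV[C]_d := \sum_(v <- s) v.

(* u \in supp rho : u lies in the span of the eigenvectors of rho with
   nonzero eigenvalues (a span vector is a finite sum of such
   eigenvectors, scalars being absorbed into the eigenvectors) *)
Definition eigvec_nz (d : nat) (rho : 'M[C]_d) (v : 'cV[C]_d) : Prop :=
  exists2 a : C, a != 0 & rho *m v = a *: v.

Definition in_supp (d : nat) (rho : 'M[C]_d) (u : 'cV[C]_d) : Prop :=
  exists s : seq 'cV[C]_d, (forall v, v \in s -> eigvec_nz rho v) /\ u = vsum s.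

Definition Fk (d m : nat) (E : 'I_m -> 'M[C]_d -> 'M[C]_d) (M1 : 'M[C]_d)
  (k : 'I_m) (rho : 'M[C]_d) : 'M[C]_d := E k (M1 *m rho *m adj M1).

Definition Fstr (d m : nat) (E : 'I_m -> 'M[C]_d -> 'M[C]_d) (M1 : 'M[C]_d)
  (f : seq 'I_m) (rho : 'M[C]_d) : 'M[C]_d :=
  foldl (fun A k => Fk E M1 k A) rho f.

Definition Fsum (d m : nat) (E : 'I_m -> 'M[C]_d -> 'M[C]_d) (M1 : 'M[C]_d)
  (rho : 'M[C]_d) : 'M[C]_d := \sum_(k < m) Fk E M1 k rho.

(* u \in H_URR = bigcap_n span (union_{|f| >= n} supp F_f(rho0)) *)
Definition in_URR (d m : nat) (E : 'I_m -> 'M[C]_d -> 'M[C]_d) (M1 : 'M[C]_d)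
  (rho0 : 'M[C]_d) (u : 'cV[C]_d) : Prop :=
  forall n : nat,
    exists s : seq (seq 'I_m * 'cV[C]_d),
      (forall p, p \in s -> n <= size p.1 /\ in_supp (Fstr E M1 p.1 rho0) p.2)%N
      /\ u = vsum (map snd s).

End QDefs.

(* Supports are handled through kernels.  For a psd operator A, supp A is both
   the range of A and the orthogonal complement of ker A; so supp Y <= supp X
   iff ker X <= ker Y ([kersub X Y]), and the kernel of a sum of psd operators
   is the intersection of the kernels.  A positive linear map G preserves
   kernel inclusion: ker B <= ker A implies ker G(B) <= ker G(A).

   For the windows W(n, k) = sum_{i < k} F^(n+i)(rho0) we have
   W(n, k+1) = F^n(rho0) + F(W(n, k)) and W(n+1, k) = F(W(n, k)).  Hence the
   kernel chains k |-> ker W(n, k) and n |-> ker W(n, d) stop changing as soon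
   as they stall once, and counting ranks in dimension d they do so by step d:
   ker W(n, d) <= ker F^j(rho0) for all j >= n, and ker W(N, d) = ker W(d, d)
   for N >= d.  Since ker F^j(rho0) is the intersection of the kernels of the
   F_f(rho0) with |f| = j, both inclusions of H_URR = supp W(d, d) follow. *)
From HB Require Import structures.
From mathcomp Require Import all_boot all_order all_algebra.
From mathcomp Require Import sesquilinear spectral ring zify.
Set Implicit Arguments. Unset Strict Implicit. Unset Printing Implicit Defensive.
Import Order.TTheory GRing.Theory Num.Theory.
Local Open Scope ring_scope.

Section Operators.
Variables (C : numClosedFieldType) (d : nat).
Local Notation M := ('M[C]_d).
Local Notation V := ('cV[C]_d).

Lemma adj_mul m n p (A : 'M[C]_(m, n)) (B : 'M[C]_(n, p)) :
  adj (A *m B) = adj B *m adj A.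
Proof. by rewrite /adj map_mxM trmx_mul. Qed.

Lemma adjK m n (A : 'M[C]_(m, n)) : adj (adj A) = A.
Proof. by apply/matrixP => i j; rewrite !mxE conjCK. Qed.

Lemma adjD m n (A B : 'M[C]_(m, n)) : adj (A + B) = adj A + adj B.
Proof. by apply/matrixP => i j; rewrite !mxE rmorphD. Qed.

Lemma adjZ m n a (A : 'M[C]_(m, n)) : adj (a *: A) = a^* *: adj A.
Proof. by apply/matrixP => i j; rewrite !mxE rmorphM. Qed.

Lemma adj0 m n : adj (0 : 'M[C]_(m, n)) = 0.
Proof. by apply/matrixP => i j; rewrite !mxE rmorph0. Qed.

Lemma adj_trC m n (A : 'M[C]_(m, n)) : adj A = (A ^t*)%sesqui.
Proof. by rewrite /adj map_trmx. Qed.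

Definition sform (A : M) (u v : V) : C := (adj u *m A *m v) 0 0.

Lemma sformDl A u v w : sform A (u + v) w = sform A u w + sform A v w.
Proof. by rewrite /sform adjD !mulmxDl mxE. Qed.

Lemma sformDr A u v w : sform A w (u + v) = sform A w u + sform A w v.
Proof. by rewrite /sform !mulmxDr mxE. Qed.

Lemma sformZl A a u w : sform A (a *: u) w = a^* * sform A u w.
Proof. by rewrite /sform adjZ -!scalemxAl mxE. Qed.

Lemma sformZr A a u w : sform A w (a *: u) = a * sform A w u.
Proof. by rewrite /sform -!scalemxAr mxE. Qed.

Lemma sform_add A B u v : sform (A + B) u v = sform A u v + sform B u v.
Proof. by rewrite /sform mulmxDr mulmxDl mxE. Qed.

Lemma sform_scale (A : M) a u v : sform (a *: A) u v = a * sform A u v.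
Proof. by rewrite /sform -scalemxAr -scalemxAl mxE. Qed.

Lemma sform_opp (A : M) u v : sform (- A) u v = - sform A u v.
Proof. by rewrite -scaleN1r sform_scale mulN1r. Qed.

Lemma sform_sum I (r : seq I) (P : pred I) (F : I -> M) u v :
  sform (\sum_(i <- r | P i) F i) u v = \sum_(i <- r | P i) sform (F i) u v.
Proof.
apply: (big_morph (fun X => sform X u v)) => [X Y|]; first exact: sform_add.
by rewrite /sform mulmx0 mul0mx mxE.
Qed.

Lemma adj_delta (i : 'I_d) : adj (delta_mx i 0 : V) = delta_mx 0 i.
Proof.
apply/matrixP => a b; rewrite !mxE.
by case: (a == 0) (b == i) => [] [] /=; rewrite ?rmorph1 ?rmorph0.
Qed.

Lemma sform_delta A i j : sform A (delta_mx i 0) (delta_mx j 0) = A i j.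
Proof. by rewrite /sform adj_delta -rowE -colE !mxE. Qed.

Lemma sform_deltal A i z : sform A (delta_mx i 0) z = (A *m z) i 0.
Proof. by rewrite /sform adj_delta -rowE -row_mul mxE. Qed.

Lemma sform_outer (c x : V) :
  sform (c *m adj c) x x = (adj x *m c) 0 0 * ((adj x *m c) 0 0)^*.
Proof.
rewrite /sform !mulmxA -(mulmxA (adj x *m c)) [LHS]mxE big_ord1.
have -> : adj c *m x = adj (adj x *m c) by rewrite adj_mul adjK.
by rewrite [in X in _ * X]mxE [in X in _ * X]mxE.
Qed.

Lemma psd0 : psd (0 : M).
Proof. by move=> x; rewrite -/(sform _ x x) /sform mulmx0 mul0mx mxE. Qed.

Lemma psdD (A B : M) : psd A -> psd B -> psd (A + B).
Proof.
by move=> pA pB x; rewrite -/(sform _ x x) sform_add addr_ge0 ?pA ?pB.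
Qed.

Lemma psd_sum I (r : seq I) (P : pred I) (F : I -> M) :
  (forall i, P i -> psd (F i)) -> psd (\sum_(i <- r | P i) F i).
Proof.
by move=> h; apply: (big_ind (fun X => psd X)) => //; [exact: psd0|exact: psdD].
Qed.

Lemma psd_outer (c : V) : psd (c *m adj c).
Proof. by move=> x; rewrite -/(sform _ x x) sform_outer mul_conjC_ge0. Qed.

Section PsdForm.
Variable A : M.
Hypothesis pA : psd A.

Lemma psd_real u : (sform A u u)^* = sform A u u.
Proof. exact/conj_Creal/ger0_real/pA. Qed.

(* Polarization: the form of a psd operator is Hermitian, since each value
   <u + a v, A (u + a v)> is real; taking a = 1 and a = 'i gives the claim. *)
Lemma psd_sform_conj u v : (sform A u v)^* = sform A v u.
Proof.
set x := sform A u v; set y := sform A v u.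
have selfconj a : a^* * x^* + a * y^* = a * x + a^* * y.
  have := psd_real (u + a *: v).
  rewrite !sformDl !sformDr !sformZl !sformZr !rmorphD !rmorphM /= conjCK.
  rewrite !psd_real -/x -/y => /eqP; rewrite -subr_eq0 => /eqP h.
  by apply/eqP; rewrite -subr_eq0 -h; apply/eqP; ring.
have e1 := selfconj 1; rewrite rmorph1 !mul1r in e1.
have ei := selfconj 'i; rewrite conjCi in ei.
have e3 : x - y + x^* - y^* = 0.
  have : 'i * (x - y + x^* - y^*) = 0.
    by move/eqP: ei; rewrite -subr_eq0 => /eqP h; rewrite -oppr0 -h; ring.
  by move/eqP; rewrite mulf_eq0 (negbTE (neq0Ci _)) => /eqP.
have n2 : (2%:R : C) != 0 by rewrite pnatr_eq0.
apply: (mulfI n2); apply/eqP; rewrite -subr_eq0; apply/eqP.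
have -> : 2%:R * x^* - 2%:R * y = (x^* + y^*) - (x + y) + (x - y + x^* - y^*).
  by ring.
by rewrite e1 e3 subrr addr0.
Qed.

Lemma psd_adj : adj A = A.
Proof.
by apply/matrixP => i j; rewrite !mxE -sform_delta psd_sform_conj sform_delta.
Qed.

Lemma psd_hermsym : A \is hermsymmx.
Proof.
apply/is_hermitianmxP; rewrite expr0 scale1r -map_trmx.
by have := psd_adj; rewrite /adj => ->.
Qed.

Lemma sform_quad (z w : V) t :
  sform A (z - t *: w) (z - t *: w) =
  sform A z z - t * (sform A w z)^* - t^* * sform A w z
    + t^* * t * sform A w w.
Proof.
rewrite -scaleNr !sformDl !sformDr !sformZl !sformZr psd_sform_conj rmorphN /=.
ring.
Qed.

Lemma psd_CS (w z : V) :
  sform A w z * (sform A w z)^* <= sform A w w * sform A z z.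
Proof.
have := pA w; have := pA z; have := psd_real w; have := psd_real z.
set a := sform A w w; set b := sform A w z; set g := sform A z z.
move=> rg ra hg ha.
have bb_real : (b * b^*)^* = b * b^* by rewrite rmorphM /= conjCK mulrC.
have [a0|an0] := eqVneq a 0.
  (* a = 0: the quadratic is affine in t, so b must vanish *)
  rewrite a0 mul0r; have [->|bn0] := eqVneq b 0; first by rewrite mul0r.
  have bbn0 : b * b^* != 0 by rewrite mul_conjC_eq0.
  pose s := (g + 1) / (b * b^*).
  have sreal : s^* = s.
    by rewrite /s rmorphM /= rmorphV ?unitfE //= bb_real rmorphD /= rg rmorph1.
  have := pA (z - (s * b) *: w).
  rewrite -/(sform _ _ _) sform_quad -/a -/b -/g a0 rmorphM /= sreal mulr0 addr0.
  have -> : g - s * b * b^* - s * b^* * b = g - 2%:R * (s * (b * b^*)) by ring.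
  rewrite /s mulfVK // (_ : _ - _ = - (g + 2%:R)); last by ring.
  rewrite oppr_ge0 => h.
  by have := lt_le_trans (ltr_wpDl hg (ltr0Sn C 1)) h; rewrite ltxx.
have apos : 0 < a by rewrite lt_def an0 ha.
have := pA (z - (b / a) *: w).
rewrite -/(sform _ _ _) sform_quad -/a -/b -/g rmorphM /= rmorphV ?unitfE //= ra.
have -> : g - b / a * b^* - b^* / a * b + b^* / a * (b / a) * a =
          (a * g - b * b^*) / a by field.
by rewrite pmulr_lge0 ?invr_gt0 // subr_ge0.
Qed.

Lemma psd_ker (z : V) : sform A z z = 0 -> A *m z = 0.
Proof.
move=> h0; apply/matrixP => i j; rewrite ord1 [RHS]mxE.
have := psd_CS (delta_mx i 0) z; rewrite h0 mulr0 sform_deltal => h.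
have : (A *m z) i 0 * ((A *m z) i 0)^* = 0.
  by apply/eqP; rewrite eq_le h mul_conjC_ge0.
by move/eqP; rewrite mul_conjC_eq0 => /eqP.
Qed.

End PsdForm.

(* Spectral theorem: a Hermitian operator has an eigenbasis resolving the
   identity (the columns of the adjoint of a unitary diagonalizing matrix). *)
Lemma hermsym_spectral (A : M) : A \is hermsymmx ->
  exists (c : 'I_d -> V) (D : 'I_d -> C),
    (forall i, A *m c i = D i *: c i) /\ \sum_i c i *m adj (c i) = 1%:M.
Proof.
move=> /hermitian_normalmx /orthomx_spectralP.
set P := spectralmx A; set D := spectral_diag A => eA.
have uP : P \is unitarymx := spectral_unitarymx A.
have PtP : (P^t*)%sesqui *m P = 1%:M := mulmx1C (unitarymxP uP).
rewrite invmx_unitary // in eA.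
exists (fun i => (P^t*)%sesqui *m delta_mx i 0), (fun i => D 0 i); split.
- move=> i; rewrite {1}eA -!mulmxA (mulmxA P) (unitarymxP uP) mul1mx.
  rewrite mul_diag_mx scalemxAr; congr (_ *m _); apply/matrixP => k l.
  by rewrite !mxE; case: (eqVneq k i) => [->|_]; rewrite ?mulr1 ?mulr0 ?mulr0n.
- under eq_bigr => i _ do rewrite adj_mul adj_delta adj_trC trmxCK mulmxA
    -(mulmxA _ (delta_mx i 0)) mul_delta_mx.
  by rewrite -mulmx_suml -mulmx_sumr -mx1_sum_delta mulmx1.
Qed.

Definition perp_ker (A : M) (x : V) :=
  forall z : V, A *m z = 0 -> adj z *m x = 0.

(* Support vectors lie in the range: a sum of eigenvectors v = A (a^-1 v). *)
Lemma in_supp_range (A : M) x : in_supp A x -> exists w, x = A *m w.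
Proof.
case=> s [hs ->]; elim: s hs => [|v s IH] hs.
  by exists 0; rewrite /vsum big_nil mulmx0.
have [a an0 hv] := hs v (mem_head _ _).
have [w ew] : exists w, vsum s = A *m w.
  by apply: IH => u us; apply: hs; rewrite in_cons us orbT.
exists (a^-1 *: v + w); rewrite /vsum big_cons -/(vsum s) ew mulmxDr.
by rewrite -scalemxAr hv scalerA mulVf // scale1r.
Qed.

Lemma range_perp_ker (A : M) w : psd A -> perp_ker A (A *m w).
Proof.
by move=> pA z hz; rewrite mulmxA -{1}(psd_adj pA) -adj_mul hz adj0 mul0mx.
Qed.

Lemma in_supp_perp_ker (A : M) x : psd A -> in_supp A x -> perp_ker A x.
Proof. by move=> pA /in_supp_range [w ->]; apply: range_perp_ker. Qed.

(* Conversely, expanding x in an eigenbasis of A, the components along the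
   kernel vanish and the others are eigenvectors for nonzero eigenvalues. *)
Lemma perp_ker_in_supp (A : M) x : psd A -> perp_ker A x -> in_supp A x.
Proof.
move=> pA ho; have [c [D [hc h1]]] := hermsym_spectral (psd_hermsym pA).
pose t i := c i *m (adj (c i) *m x).
exists (map t (index_enum 'I_d)); split.
  move=> v /mapP [i _ ->].
  have [D0|Dn0] := eqVneq (D i) 0; last first.
    by exists (D i) => //; rewrite /t mulmxA hc scalemxAl.
  have /ho e : A *m c i = 0 by rewrite hc D0 scale0r.
  by exists 1; rewrite ?oner_neq0 // /t e !mulmx0 scale1r.
rewrite /vsum big_map -[RHS]/(\sum_i t i).
by under eq_bigr => i _ do rewrite /t mulmxA; rewrite -mulmx_suml h1 mul1mx.
Qed.

Lemma range_in_supp (A : M) w : psd A -> in_supp A (A *m w).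
Proof. by move=> pA; apply/perp_ker_in_supp/range_perp_ker. Qed.

(* ker X is contained in ker Y; for psd operators this says supp Y <= supp X. *)
Definition kersub (X Y : M) := forall z : V, X *m z = 0 -> Y *m z = 0.

Lemma ker_add (A B : M) (z : V) : psd A -> psd B ->
  (A + B) *m z = 0 <-> A *m z = 0 /\ B *m z = 0.
Proof.
move=> pA pB; split; last by case=> h1 h2; rewrite mulmxDl h1 h2 addr0.
move=> h; have : sform A z z + sform B z z = 0.
  by rewrite -sform_add /sform -mulmxA h mulmx0 mxE.
move/eqP; rewrite paddr_eq0; try by [apply: pA|apply: pB].
by case/andP=> /eqP/(psd_ker pA) -> /eqP/(psd_ker pB) ->.
Qed.

Lemma ker_sum (I : eqType) (r : seq I) (F : I -> M) (z : V) :
  (forall i, psd (F i)) ->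
  (\sum_(i <- r) F i) *m z = 0 <-> (forall i, i \in r -> F i *m z = 0).
Proof.
move=> pF; elim: r => [|a r IH]; first by rewrite big_nil mul0mx.
rewrite big_cons ker_add //; last exact: psd_sum.
rewrite IH; split.
  by case=> h1 h2 i; rewrite in_cons => /predU1P[->|/h2].
by move=> h; split=> [|i ir]; apply: h; rewrite in_cons ?eqxx ?ir ?orbT.
Qed.

Lemma ker_sum_ord k (F : nat -> M) (z : V) : (forall i, psd (F i)) ->
  (\sum_(i < k) F i) *m z = 0 <-> (forall i, (i < k)%N -> F i *m z = 0).
Proof.
move=> pF; rewrite -(big_mkord xpredT F) /index_iota subn0 ker_sum //.
split=> h i; first by move=> ik; apply: h; rewrite mem_iota.
by rewrite mem_iota => /andP[_]; apply: h.
Qed.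

(* Kernel inclusion in terms of the row spaces of kermx, which gives access
   to ranks: kernel inclusion reverses ranks, and is an equality when the
   ranks agree. *)
Lemma kersub_kermx (X Y : M) : kersub X Y <-> (kermx X^T <= kermx Y^T)%MS.
Proof.
have kerT (Z : M) z : (Z *m z = 0) <-> (z^T <= kermx Z^T)%MS.
  by rewrite sub_kermx -trmx_mul trmx_eq0; split => /eqP.
split=> h; last by move=> z /kerT hz; apply/kerT; exact: submx_trans hz h.
apply/row_subP => i; rewrite -[row i _]trmxK; apply/kerT/h/kerT.
by rewrite trmxK row_sub.
Qed.

Lemma kersub_rank (X Y : M) : kersub X Y -> (\rank Y <= \rank X)%N.
Proof.
move=> /kersub_kermx /mxrankS; rewrite !mxrank_ker !mxrank_tr.
by have := rank_leq_row X; have := rank_leq_row Y; lia.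
Qed.

Lemma kersub_rank_eq (X Y : M) :
  kersub X Y -> (\rank X <= \rank Y)%N -> kersub Y X.
Proof.
move=> h hr; apply/kersub_kermx.
have := (mxrank_leqif_sup ((kersub_kermx X Y).1 h)).2.
rewrite !mxrank_ker !mxrank_tr => <-.
have := kersub_rank h; have := rank_leq_row X; have := rank_leq_row Y.
by move=> *; apply/eqP; lia.
Qed.

Section LinearMap.
Variable G : M -> M.
Hypothesis linG : linear_map G.

Lemma lmap0 : G 0 = 0.
Proof.
have := linG 1 0 0; rewrite !scale1r addr0 => h.
by apply/esym/(addrI (G 0)); rewrite addr0 -h.
Qed.

Lemma lmapD A B : G (A + B) = G A + G B.
Proof. by have := linG 1 A B; rewrite !scale1r. Qed.

Lemma lmapZ a A : G (a *: A) = a *: G A.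
Proof. by have := linG a A 0; rewrite lmap0 !addr0. Qed.

Lemma lmapN A : G (- A) = - G A.
Proof. by rewrite -scaleN1r lmapZ scaleN1r. Qed.

Lemma lmap_sum I (r : seq I) (P : pred I) (F : I -> M) :
  G (\sum_(i <- r | P i) F i) = \sum_(i <- r | P i) G (F i).
Proof. by apply: (big_morph G lmapD lmap0). Qed.

End LinearMap.

Definition positive_map (G : M -> M) :=
  linear_map G /\ forall X : M, psd X -> psd (G X).

Lemma positive_map_comp (G H : M -> M) :
  positive_map G -> positive_map H -> positive_map (H \o G).
Proof.
move=> [linG posG] [linH posH]; split=> [a A B | X pX] /=; last exact/posH/posG.
by rewrite linG linH.
Qed.

Lemma psd_conj (K X : M) : psd X -> psd (K *m X *m adj K).
Proof. by move=> pX u; have := pX (adj K *m u); rewrite adj_mul adjK !mulmxA. Qed.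

Lemma positive_map_conj (K : M) : positive_map (fun X => K *m X *m adj K).
Proof.
split=> [a A B | X]; last exact: psd_conj.
by rewrite mulmxDr mulmxDl -scalemxAr -scalemxAl.
Qed.

Lemma cp_psd (G : M -> M) (X : M) : completely_positive G -> psd X -> psd (G X).
Proof.
move=> cpG pX v; have hb : block_psd (fun _ _ : 'I_1 => X).
  by move=> w; rewrite !big_ord1; apply: pX.
by have := cpG 1%N _ hb (fun _ => v); rewrite !big_ord1.
Qed.

(* If G B kills z and c = B w lies in the range of B, then G (c c^* ) kills
   z as well: by Cauchy-Schwarz c c^* <= <w, B w> B, and G preserves this
   order. *)
Lemma positive_map_outer (G : M -> M) (B : M) (w z : V) :
  positive_map G -> psd B -> G B *m z = 0 ->
  sform (G ((B *m w) *m adj (B *m w))) z z = 0.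
Proof.
move=> [linG posG] pB hz; set c := B *m w.
have pY : psd (sform B w w *: B - c *m adj c).
  move=> x; rewrite -/(sform _ x x) sform_add sform_opp sform_outer sform_scale.
  rewrite subr_ge0 [sform B w w * _]mulrC (_ : (adj x *m c) 0 0 = sform B x w).
    exact: psd_CS.
  by rewrite /c mulmxA.
have := posG _ pY z; rewrite -/(sform _ z z) lmapD // lmapN // lmapZ //.
rewrite sform_add sform_opp sform_scale.
have -> : sform (G B) z z = 0 by rewrite /sform -mulmxA hz mulmx0 mxE.
rewrite mulr0 add0r oppr_ge0 => h.
by apply/eqP; rewrite eq_le h; exact: (posG _ (psd_outer c)).
Qed.

(* Positive maps preserve kernel inclusion between psd operators: decompose
   A into rank-one pieces, each in the range of B. *)
Lemma positive_map_kersub (G : M -> M) (A B : M) :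
  positive_map G -> psd A -> psd B -> kersub B A -> kersub (G B) (G A).
Proof.
move=> posG pA pB hBA z hz; have [linG _] := posG.
apply: psd_ker; first by apply: posG.2.
have [c [D [hc h1]]] := hermsym_spectral (psd_hermsym pA).
have -> : A = \sum_i D i *: (c i *m adj (c i)).
  rewrite -[A]mulmx1 -h1 mulmx_sumr; apply: eq_bigr => i _.
  by rewrite mulmxA hc scalemxAl.
rewrite lmap_sum // sform_sum big1 // => i _; rewrite lmapZ // sform_scale.
have [->|Dn0] := eqVneq (D i) 0; first by rewrite mul0r.
have : perp_ker B (c i).
  move=> z' /hBA /(range_perp_ker (c i) pA); rewrite hc -scalemxAr.
  by move/eqP; rewrite scalemx_eq0 (negbTE Dn0) => /eqP.
move=> /(perp_ker_in_supp pB) /in_supp_range [w ->].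
by rewrite (positive_map_outer _ posG) ?mulr0.
Qed.

End Operators.

Local Close Scope ring_scope.

(* A nondecreasing sequence of naturals bounded by b, in which a single stall
   r k.+1 = r k forces the next one, is constant from index b on: it either
   stalls before b, or it increases strictly up to the bound. *)
Lemma stall_stable (r : nat -> nat) (b : nat) :
  (forall k, r k <= b) -> (forall k, r k <= r k.+1) ->
  (forall k, r k.+1 <= r k -> r k.+2 <= r k.+1) ->
  forall j, b <= j -> r j = r b.
Proof.
move=> bounded mono stall.
(* before any stall, r grows by at least one per step *)
have grows k : (exists2 i, i < k & r i.+1 <= r i) \/ k <= r k.
  elim: k => [|k [[i ik hi]|IH]]; [by right | by left; exists i => //; lia |].
  have [hk|hk] := leqP (r k.+1) (r k); first by left; exists k.
  by right; lia.
have rmono := homo_leq leqnn leq_trans mono.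
have flat j : b <= j -> r j.+1 <= r j.
  case: (grows b) => [[i ib hi]|hb] hj.
    have stays k : r (i + k).+1 <= r (i + k).
      by elim: k => [|k IH]; rewrite ?addn0 // addnS; apply: stall.
    by have := stays (j - i); rewrite subnKC //; lia.
  by have := bounded j.+1; have := rmono _ _ hj; lia.
elim=> [|j IH] hj; first by have -> : b = 0 by lia.
have [->//|hbj] := eqVneq b j.+1; have hb : b <= j by lia.
by apply/eqP; rewrite -(IH hb) eqn_leq flat ?mono.
Qed.

Local Open Scope ring_scope.

Section Program.
Variables (C : numClosedFieldType) (d m : nat).
Variables (E : 'I_m -> 'M[C]_d -> 'M[C]_d) (M1 : 'M[C]_d).
Hypothesis posE : forall k, positive_map (E k).
Local Notation M := ('M[C]_d).
Local Notation V := ('cV[C]_d).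
Local Notation F := (Fsum E M1).

Lemma Fk_positive k : positive_map (Fk E M1 k).
Proof. exact: (positive_map_comp (positive_map_conj M1) (posE k)). Qed.

Lemma F_positive : positive_map F.
Proof.
split=> [a A B | X pX]; last by apply: psd_sum => k _; apply: (Fk_positive k).2.
rewrite /Fsum scaler_sumr -big_split; apply: eq_bigr => k _.
exact: (Fk_positive k).1.
Qed.

Lemma Fstr_positive f : positive_map (Fstr E M1 f).
Proof.
elim: f => [|k f IH]; first by split=> [a A B|X].
exact: (positive_map_comp (Fk_positive k) IH).
Qed.

Lemma iter_F_psd i X : psd X -> psd (iter i F X).
Proof. by elim: i => [|i IH] //= pX; apply/F_positive.2/IH. Qed.

(* ker F^j(rho) is the intersection of the kernels of the F_f(rho), |f| = j,
   since F^j(rho) is the sum of these psd operators. *)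
Lemma ker_iter_F j (rho : M) (z : V) : psd rho ->
  iter j F rho *m z = 0 <-> (forall f, size f = j -> Fstr E M1 f rho *m z = 0).
Proof.
elim: j rho => [|j IH] rho prho.
  by split=> [h [|k f] //|h]; apply: (h [::]).
have sumF f : Fstr E M1 f (F rho) = \sum_(k < m) Fstr E M1 f (Fk E M1 k rho).
  exact: (lmap_sum (Fstr_positive f).1).
rewrite iterSr IH; last exact: F_positive.2.
have psd_terms f k : psd (Fstr E M1 f (Fk E M1 k rho)).
  exact/(Fstr_positive f).2/(Fk_positive k).2.
split=> [h [|k f] //= [sf] | h f sf].
  by have := h f sf; rewrite sumF ker_sum //; apply; apply: mem_index_enum.
rewrite sumF ker_sum // => k _.
by apply: (h (k :: f)); rewrite /= sf.
Qed.

Fixpoint words (j : nat) : seq (seq 'I_m) :=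
  if j is j'.+1 then [seq k :: f | k <- enum 'I_m, f <- words j'] else [:: [::]].

Lemma size_words j f : f \in words j -> size f = j.
Proof.
elim: j f => [|j IH] f /=; first by rewrite inE => /eqP ->.
by case/allpairsP => -[k g] /= [_ gs ->] /=; rewrite (IH g gs).
Qed.

Lemma words_size f : f \in words (size f).
Proof.
elim: f => [|k f IH] /=; first exact: mem_head.
by apply/allpairsP; exists (k, f); rewrite /= mem_enum.
Qed.

Variable rho0 : M.
Hypothesis prho0 : psd rho0.

Definition Fpow i := iter i F rho0.
Definition window n k := \sum_(i < k) Fpow (n + i).

Lemma Fpow_psd i : psd (Fpow i).
Proof. exact: iter_F_psd. Qed.

Lemma window_psd n k : psd (window n k).
Proof. by apply: psd_sum => i _; apply: Fpow_psd. Qed.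

Lemma ker_window n k (z : V) :
  window n k *m z = 0 <-> (forall i, (i < k)%N -> Fpow (n + i) *m z = 0).
Proof. by apply: ker_sum_ord => i; apply: Fpow_psd. Qed.

Lemma F_window n k : F (window n k) = window n.+1 k.
Proof.
rewrite /window (lmap_sum F_positive.1).
by apply: eq_bigr => i _; rewrite /Fpow addSn.
Qed.

Lemma window_succ n k : window n k.+1 = Fpow n + window n.+1 k.
Proof.
rewrite /window big_ord_recl addn0; congr (_ + _).
by apply: eq_bigr => i _; rewrite addSnnS.
Qed.

Lemma kersub_window n k k' : (k' <= k)%N -> kersub (window n k) (window n k').
Proof.
move=> hk z /ker_window h; apply/ker_window => i hi.
by apply: h; apply: leq_trans hk.
Qed.

Lemma kersub_F (X Y : M) : psd X -> psd Y -> kersub X Y -> kersub (F X) (F Y).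
Proof. by move=> pX pY; apply: positive_map_kersub F_positive pY pX. Qed.

(* Windows of length d starting at n already contain every later support:
   the kernels of window n k decrease with k and stabilize once they stall,
   because window n k.+1 = F^n(rho0) + F(window n k); as ranks are bounded
   by d they are stable from k = d on. *)
Lemma window_tail n j : (n <= j)%N -> kersub (window n d) (Fpow j).
Proof.
move=> hnj; pose r k := \rank (window n k).
have mono k : (r k <= r k.+1)%N by apply/kersub_rank/kersub_window.
have stall k : (r k.+1 <= r k -> r k.+2 <= r k.+1)%N.
  move=> /(kersub_rank_eq (kersub_window (n := n) (leqnSn k))) hk.
  have hF : kersub (window n.+1 k) (window n.+1 k.+1).
    by rewrite -!F_window; apply: kersub_F hk; apply: window_psd.
  apply: kersub_rank => z; rewrite (window_succ n k) (window_succ n k.+1).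
  rewrite !ker_add; try exact: Fpow_psd; try exact: window_psd.
  by case=> h0 /hF.
pose k := maxn d (j - n).+1; have dk : (d <= k)%N := leq_maxl _ _.
have stable : r k = r d := stall_stable (fun k => rank_leq_row _) mono stall dk.
have hk : kersub (window n d) (window n k).
  by apply: kersub_rank_eq (kersub_window dk) _; rewrite -/(r k) stable.
move=> z /hk /ker_window /(_ (j - n)%N); rewrite subnKC //; apply.
exact: leq_maxr.
Qed.

(* Windows of length d starting at any N >= d have the same support: the
   kernels of window n d increase with n, and stabilize once they stall,
   because window n.+1 d = F(window n d). *)
Lemma window_shift N : (d <= N)%N -> kersub (window N d) (window d d).
Proof.
move=> hN; pose s n := \rank (window n d).
have sd n : (s n <= d)%N := rank_leq_row _.
have grow n : kersub (window n d) (window n.+1 d).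
  move=> z /window_tail hz; apply/ker_window => i _; apply: hz.
  by rewrite addSn ltnW // ltnS leq_addr.
have stall n : (d - s n.+1 <= d - s n -> d - s n.+2 <= d - s n.+1)%N.
  move=> hn; have hle : (s n <= s n.+1)%N.
    by have := sd n; have := sd n.+1; lia.
  have /kersub_F := kersub_rank_eq (grow n) hle.
  rewrite !F_window => /(_ (window_psd _ _) (window_psd _ _)) /kersub_rank.
  by rewrite -/(s n.+1) -/(s n.+2); lia.
have mono n : (d - s n <= d - s n.+1)%N.
  by have := kersub_rank (grow n); rewrite -/(s n) -/(s n.+1); lia.
have := stall_stable (r := fun n => (d - s n)%N) (fun _ => leq_subr _ _)
  mono stall hN.
move=> /= eqN; apply: kersub_rank_eq.
  move=> z /window_tail hz; apply/ker_window => i _; apply: hz.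
  exact: leq_trans hN (leq_addr _ _).
by have := sd N; have := sd d; rewrite -/(s N) -/(s d); lia.
Qed.

(* Inclusion: every F_f(rho0) with |f| >= d has
   kernel containing ker (window d d), so its support is orthogonal to that
   kernel.  Reverse inclusion: for each n the words of lengths N, ..., N+d-1
   with N = n + d give a psd sum Y whose kernel is that of window N d, hence
   contained in ker (window d d); so a support vector u of window d d is
   in the range of Y, which splits as a sum of support vectors of the F_f. *)
Theorem URR_window (u : V) : in_URR E M1 rho0 u <-> in_supp (window d d) u.
Proof.
split=> [URRu | supp_u n].
  have [s [hs ->]] := URRu d; apply/perp_ker_in_supp; first exact: window_psd.
  move=> z hz; rewrite /vsum mulmx_sumr big_map big1_seq // => p /andP[_ ps].
  have [long supp_p] := hs p ps.
  apply: (in_supp_perp_ker ((Fstr_positive p.1).2 _ prho0) supp_p).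
  exact: (ker_iter_F _ z prho0).1 (window_tail long hz) _ (erefl _).
pose N := (n + d)%N.
pose L := [seq f | i <- iota 0 d, f <- words (N + i)].
pose Y := \sum_(f <- L) Fstr E M1 f rho0.
have psd_str f : psd (Fstr E M1 f rho0) by apply: (Fstr_positive f).2.
have pY : psd Y by apply: psd_sum.
have KY : kersub Y (window d d).
  move=> z /(ker_sum _ _ psd_str) hz; apply: (window_shift (leq_addl n d)).
  apply/ker_window => i hi; apply/(ker_iter_F _ _ prho0) => f sf; apply: hz.
  apply/allpairsPdep; exists i, f; split => //; first by rewrite mem_iota.
  by rewrite -sf words_size.
have perp_u : perp_ker Y u.
  by move=> z /KY; apply: (in_supp_perp_ker (window_psd d d) supp_u).
have [w ->] := in_supp_range (perp_ker_in_supp pY perp_u).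
exists (map (fun f => (f, Fstr E M1 f rho0 *m w)) L); split.
  move=> p /mapP [f fL ->] /=; split; last exact: range_in_supp.
  move/allpairsPdep: fL => [i [g [_ gs ->]]].
  by rewrite (size_words gs) /N -addnA leq_addr.
by rewrite /Y mulmx_suml /vsum -map_comp big_map.
Qed.

End Program.

Lemma sum_shift (V : nmodType) (G : nat -> V) n k :
  \sum_(n <= i < n + k) G i = \sum_(i < k) G (n + i)%N.
Proof.
rewrite -{1}(add0n n) big_addn addKn big_mkord.
by apply: eq_bigr => i _; rewrite addnC.
Qed.

Unset Implicit Arguments.

Theorem mainTheorem3 (C : numClosedFieldType) (d m : nat)
  (E : 'I_m -> 'M[C]_d -> 'M[C]_d) (M0 M1 : 'M[C]_d) (rho0 : 'M[C]_d) :
  (0 < d)%N ->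
  (forall k, superop (E k) /\ trace_preserving (E k)) ->
  adj M0 *m M0 + adj M1 *m M1 = 1%:M ->
  density rho0 ->
  forall u : 'cV[C]_d,
    in_URR E M1 rho0 u <->
    in_supp (\sum_(d <= i < 2 * d) iter i (Fsum E M1) rho0) u.
Proof.
move=> _ superE _ [psd_rho0 _] u.
have posE k : positive_map (E k).
  by have [[linE cpE _] _] := superE k; split=> // X; apply: cp_psd.
by rewrite mul2n -addnn sum_shift; apply: URR_window.
Qed.
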